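(* $\mathcal{L}_{\mathsf{SAFA}}\subsetneq\mathcal{L}_{\mathsf{CMA}}$: every data language accepted by a SAFA is accepted by some class memory automaton, and some data language accepted by a class memory automaton is accepted by no SAFA.
   Context: $D$ is a fixed countably infinite set of data values; for a finite alphabet $\Sigma$, data languages are subsets of $(\Sigma\times D)^*$. A set augmented finite automaton (SAFA) is a tuple $M=(Q,\Sigma\times D,q_0,F,H,\delta)$: $Q$ finite set of states, $q_0\in Q$ initial, $F\subseteq Q$ final, $H=\{h_1,\dots,h_m\}$ a finite collection of (names of) sets of data values, $\delta\subseteq Q\times\Sigma\times C\times OP\times Q$ with $C=\{p(h_i),\,!p(h_i)\}$, $OP=\{-\}\cup\{\mathsf{ins}(h_i)\}$. Configurations are $(q,\langle S_1,\dots,S_m\rangle)$, $S_i\subseteq D$ finite; initially state $q_0$ and all sets empty. On reading $(a,d)$, a transition $(q,a,\alpha,op,q')$ from the current state may be taken if $\alpha=p(h_i)$ and $d\in S_i$, or $\alpha=\,!p(h_i)$ and $d\notin S_i$; then the state becomes $q'$ and if $op=\mathsf{ins}(h_j)$, $d$ is added to $S_j$. A word is accepted if some run reads it entirely and ends in $F$; $\mathcal{L}_{\mathsf{SAFA}}$ is the class of languages accepted by SAFA. A class memory automaton (CMA) is a tuple $(Q,\Sigma,\delta,q_0,F_\ell,F_g)$ with finite state set $Q$, initial state $q_0$, accepting sets $F_g\subseteq F_\ell\subseteq Q$, and $\delta\subseteq Q\times\Sigma\times(Q\cup\{\bot\})\times Q$. The automaton records for each data value $d$ the state $f(d)$ it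 entered the last time it read a position carrying $d$ ($f(d)=\bot$ if $d$ has not been read). On reading $(a,d)$ in state $q$ it may take a transition $(q,a,f(d),q')\in\delta$, after which the state is $q'$ and $f(d):=q'$. A word is accepted if some run reads it entirely, ends in a state of $F_g$, and $f(d)\in F_\ell$ for every data value $d$ occurring in the word. $\mathcal{L}_{\mathsf{CMA}}$ is the class of languages accepted by CMA. *)

From mathcomp Require Import all_boot.
Set Implicit Arguments. Unset Strict Implicit. Unset Printing Implicit Defensive.

Definition dword (Sigma : finType) := seq (Sigma * nat).

(* Sets h_1..h_m are indexed by 'I_m.
   A condition (b, i) : bool * 'I_m stands for p(h_i) if b = true and
   !p(h_i) if b = false.  An operation None stands for '-', Some j for ins(h_j). *)
Record SAFA (Sigma : finType) := {
  sQ : finType;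
  sm : nat;
  sq0 : sQ;
  sF : {set sQ};
  sdelta : {set sQ * Sigma * (bool * 'I_sm) * option 'I_sm * sQ}
}.

Definition safa_upd (m : nat) (op : option 'I_m) (S : 'I_m -> nat -> bool)
  (d : nat) : 'I_m -> nat -> bool :=
  fun j e => if op == Some j then (e == d) || S j e else S j e.

Fixpoint safa_acc (Sigma : finType) (M : SAFA Sigma) (q : sQ M)
  (S : 'I_(sm M) -> nat -> bool) (w : dword Sigma) : Prop :=
  match w with
  | [::] => q \in sF M
  | (a, d) :: w' =>
      exists (alpha : bool * 'I_(sm M)) (op : option 'I_(sm M)) (q' : sQ M),
        [/\ (q, a, alpha, op, q') \in sdelta M,
            S alpha.2 d = alpha.1 &
            safa_acc q' (safa_upd op S d) w']
  end.

Definition safa_lang (Sigma : finType) (M : SAFA Sigma) (w : dword Sigma) : Prop :=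
  safa_acc (sq0 M) (fun _ _ => false) w.

(* f(d) = None encodes f(d) = bot. *)
Record CMA (Sigma : finType) := {
  cQ : finType;
  cdelta : {set cQ * Sigma * option cQ * cQ};
  cq0 : cQ;
  cFl : {set cQ};
  cFg : {set cQ};
  cFg_sub : cFg \subset cFl
}.

Fixpoint cma_acc (Sigma : finType) (M : CMA Sigma) (w0 : dword Sigma)
  (q : cQ M) (f : nat -> option (cQ M)) (w : dword Sigma) : Prop :=
  match w with
  | [::] => q \in cFg M /\
            (forall d, d \in map snd w0 -> exists p, f d = Some p /\ p \in cFl M)
  | (a, d) :: w' =>
      exists q' : cQ M,
        (q, a, f d, q') \in cdelta M /\
        cma_acc w0 q' (fun e => if e == d then Some q' else f e) w'
  end.

Definition cma_lang (Sigma : finType) (M : CMA Sigma) (w : dword Sigma) : Prop :=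
  cma_acc w (cq0 M) (fun _ => None) w.

(* A SAFA is simulated by a CMA whose class memory f(d) records, for the data
   value d, the set of indices i with d in h_i.

   Conversely, no SAFA accepts the CMA language of data words in which every
   data value occurs at least twice.  Let an n-state SAFA accept x x, where x
   carries n distinct data values.  While reading the first x, its run revisits
   some state p along a factor w2 of x whose data values lie in no set yet.
   Inserting before w2 a copy of w2 with fresh data values repeats that loop
   back to p, only putting fresh values into the sets; the rest of the run is
   then unaffected and accepts a word in which the fresh values occur once. *)

From mathcomp Require Import all_boot.
Set Implicit Arguments. Unset Strict Implicit. Unset Printing Implicit Defensive.

Local Notation data := (map snd).

Section SafaToCma.
Variables (Sigma : finType) (M : SAFA Sigma).

Definition member_sets (o : option (sQ M * {set 'I_(sm M)})) : {set 'I_(sm M)} :=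
  if o is Some p then p.2 else set0.

Definition insert_op (op : option 'I_(sm M)) (B : {set 'I_(sm M)}) :=
  if op is Some j then j |: B else B.

(* The second component of a state is the set of indices i such that h_i
   contains the data value just read. *)
Definition cma_of_safa_trans
    (x : (sQ M * {set 'I_(sm M)}) * Sigma * option (sQ M * {set 'I_(sm M)})
         * (sQ M * {set 'I_(sm M)})) : bool :=
  let: (q, _, a, o, (q', B')) := x in
  [exists alpha, exists op,
    [&& (q, a, alpha, op, q') \in sdelta M,
        (alpha.2 \in member_sets o) == alpha.1 &
        B' == insert_op op (member_sets o)]].

Definition cma_of_safa : CMA Sigma :=
  {| cQ := (sQ M * {set 'I_(sm M)})%type;
     cdelta := [set x | cma_of_safa_trans x];
     cq0 := (sq0 M, set0);
     cFl := setT;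
     cFg := [set p | p.1 \in sF M];
     cFg_sub := subsetT _ |}.

Lemma cma_of_safa_acc (w0 : dword Sigma) w q B S (f : nat -> option (cQ cma_of_safa)) :
  (forall j e, S j e = (j \in member_sets (f e))) ->
  {in data w0, forall d, (d \in data w) || (f d != None)} ->
  safa_acc q S w <-> cma_acc w0 ((q, B) : cQ cma_of_safa) f w.
Proof.
elim: w q B S f => [|[a d] w IH] q B S f S_f w0_f; rewrite /=.
  rewrite inE /=; split=> [Fq|[]//]; split=> // e /w0_f /=.
  by case: (f e) => // p _; exists p; rewrite inE.
set f' := fun p' e => if e == d then Some p' else f e.
have upd_f op p' : p'.2 = insert_op op (member_sets (f d)) ->
    forall j e, safa_upd op S d j e = (j \in member_sets (f' p' e)).
  move=> p'E j e; rewrite /safa_upd /f'; case: (e =P d) => [->|_].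
    by rewrite /= p'E S_f; case: op {p'E} => [k|] //=; rewrite in_setU1 eq_sym.
  by case: ifP; rewrite S_f.
have w0_f' p' : {in data w0, forall e, (e \in data w) || (f' p' e != None)}.
  by move=> e /w0_f /=; rewrite inE /f'; case: (e =P d) => _ /=; rewrite ?orbT.
split=> [[alpha [op [q' [dq Sd acc]]]]|[[q' B'] [dq acc]]].
  exists (q', insert_op op (member_sets (f d))); split.
    by rewrite inE; apply/existsP; exists alpha; apply/existsP; exists op;
      rewrite dq -S_f Sd !eqxx.
  exact/(IH q' _ _ _ (upd_f op (q', _) erefl) (w0_f' _)).
move: dq; rewrite inE => /existsP [alpha /existsP [op /and3P [dq Sd /eqP B'E]]].
exists alpha, op, q'; split=> //; first by rewrite S_f; apply/eqP.
exact/(IH q' B' _ _ (upd_f op (q', B') B'E) (w0_f' _)).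
Qed.

Lemma cma_of_safaP w : safa_lang M w <-> cma_lang cma_of_safa w.
Proof. by apply: cma_of_safa_acc => [j e|d ->]; rewrite ?inE. Qed.

End SafaToCma.

Section Twice.
Variable Sigma : finType.

(* The state entered on reading d tells whether d occurred before, so the
   local acceptance condition F_l = {true} says that every data value occurs
   at least twice. *)
Definition cma_twice : CMA Sigma :=
  {| cQ := bool;
     cdelta := [set x | x.2 == isSome x.1.2];
     cq0 := true;
     cFl := [set true];
     cFg := [set true];
     cFg_sub := subxx _ |}.

Definition twice_memory (u : seq nat) (d : nat) : option bool :=
  if d \in u then Some (1 < count_mem d u) else None.

Lemma cma_twice_acc (w0 : dword Sigma) w u q (f : nat -> option bool) :
  {subset data w <= data w0} -> f =1 twice_memory u ->
  cma_acc (M := cma_twice) w0 q f w <->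
  (nilp w ==> q) /\ {in data w0, forall d, 1 < count_mem d (u ++ data w)}.
Proof.
elim: w u q f => [|[a d] w IH] u q f w_w0 f_u /=.
  rewrite cats0 inE; split=> [[/eqP -> mem_w0]|[/= -> count_w0]].
    split=> // e /mem_w0 [p []]; rewrite f_u /twice_memory inE.
    by case: ifP => // _ [<-] /eqP.
  split=> // e /count_w0 e_u; exists true; rewrite f_u /twice_memory inE e_u.
  by rewrite -has_pred1 has_count (ltn_trans _ e_u).
have f'_u : (fun e => if e == d then Some (d \in u) else f e) =1 twice_memory (rcons u d).
  move=> e; rewrite /twice_memory f_u -cats1 mem_cat count_cat /= inE [d == e]eq_sym.
  case: (e =P d) => [->|_]; last by rewrite orbF !addn0.
  by rewrite orbT addn0 addn1 ltnS -has_pred1 has_count.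
have d_w0 : d \in data w0 by apply: w_w0; rewrite inE eqxx.
have w_w0' : {subset data w <= data w0}.
  by move=> e e_w; apply: w_w0; rewrite inE e_w orbT.
have trans_d q' : ((q, a, f d, q') \in cdelta cma_twice) = (q' == (d \in u)).
  by rewrite inE f_u /twice_memory; case: ifP.
split=> [[q' []]|[_ count_w0]].
  by rewrite trans_d => /eqP -> /(IH _ _ _ w_w0' f'_u) [_]; rewrite cat_rcons.
exists (d \in u); split; first by rewrite trans_d.
apply/(IH _ _ _ w_w0' f'_u); rewrite cat_rcons; split=> //.
apply/implyP => /nilP w_nil; move: (count_w0 d d_w0).
by rewrite w_nil count_cat /= eqxx addn1 ltnS -has_count has_pred1.
Qed.

Lemma cma_twiceP w :
  cma_lang cma_twice w <-> {in data w, forall d, 1 < count_mem d (data w)}.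
Proof.
have := @cma_twice_acc w w [::] true (fun _ => None) (fun _ => id) (fun _ => erefl).
case=> acc_count count_acc; split=> [/acc_count[] //|count_w].
by apply: count_acc; rewrite implybT.
Qed.

End Twice.

Section SafaRuns.
Variables (Sigma : finType) (M : SAFA Sigma).
Local Notation sets := ('I_(sm M) -> nat -> bool).

Definition rename (sigma : nat -> nat) (w : dword Sigma) : dword Sigma :=
  [seq (x.1, sigma x.2) | x <- w].

Lemma data_rename sigma w : data (rename sigma w) = map sigma (data w).
Proof. by rewrite -!map_comp. Qed.

Fixpoint safa_run (q : sQ M) (S : sets) (w : dword Sigma) (qs : seq (sQ M))
    (q' : sQ M) (S' : sets) : Prop :=
  match w, qs with
  | [::], [::] => q' = q /\ S' = S
  | (a, d) :: w, p :: qs => exists alpha op,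
      [/\ (q, a, alpha, op, p) \in sdelta M, S alpha.2 d = alpha.1 &
          safa_run p (safa_upd op S d) w qs q' S']
  | _, _ => False
  end.

Lemma safa_acc_catP q S u v :
  safa_acc q S (u ++ v) <->
  exists qs q' S', safa_run q S u qs q' S' /\ safa_acc q' S' v.
Proof.
elim: u q S => [|[a d] u IH] q S /=.
  split=> [acc|[qs [q' [S' [run acc]]]]]; first by exists [::], q, S.
  by case: qs run acc => // [[-> ->]].
split=> [[alpha [op [p [dq Sd /IH [qs [q' [S' [run acc]]]]]]]]|].
  by exists (p :: qs), q', S'; split=> //; exists alpha, op.
case=> [[|p qs] [q' [S' [//= [alpha [op [dq Sd run]]] acc]]]].
by exists alpha, op, p; split=> //; apply/IH; exists qs, q', S'.
Qed.

Lemma safa_run_size q S w qs q' S' : safa_run q S w qs q' S' -> size qs = size w.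
Proof.
by elim: w q S qs => [|[a d] w IH] q S [|p qs] //= [alpha [op [_ _ /IH ->]]].
Qed.

Lemma safa_run_visit q S w qs q' S' z :
  safa_run q S w qs q' S' -> z \in qs ->
  exists w1 w2 qs1 qs2 Sz, [/\ w = w1 ++ w2, w1 != [::],
    safa_run q S w1 qs1 z Sz & safa_run z Sz w2 qs2 q' S'].
Proof.
elim: w q S qs => [|[a d] w IH] q S [|p qs] //= [alpha [op [dq Sd run]]].
rewrite inE => /predU1P [->|/(IH _ _ _ run) [w1 [w2 [qs1 [qs2 [Sz [-> _ run1 run2]]]]]]].
  by exists [:: (a, d)], w, [:: p], qs, (safa_upd op S d); split=> //; exists alpha, op.
exists ((a, d) :: w1), w2, (p :: qs1), qs2, Sz; split=> //.
by exists alpha, op.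
Qed.

Lemma safa_run_repeat q S w qs q' S' :
  safa_run q S w qs q' S' -> ~~ uniq (q :: qs) ->
  exists w1 w2 w3 qs1 qs2 qs3 p S1 S2, [/\ w = w1 ++ w2 ++ w3, w2 != [::],
    safa_run q S w1 qs1 p S1, safa_run p S1 w2 qs2 p S2 &
    safa_run p S2 w3 qs3 q' S'].
Proof.
elim: w q S qs => [|[a d] w IH] q S [|p qs] // run; rewrite /= negb_and negbK.
case/orP=> [q_qs|]; first have [w1 [w2 [qs1 [qs2 [S1 [-> w1_nil run1 run2]]]]]] :=
  safa_run_visit run q_qs.
  by exists [::], w1, w2, [::], qs1, qs2, q, S, S1.
case: run => alpha [op [dq Sd run]] /(IH _ _ _ run).
case=> w1 [w2 [w3 [qs1 [qs2 [qs3 [p' [S1 [S2 [-> w2_nil run1 run2 run3]]]]]]]]].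
exists ((a, d) :: w1), w2, w3, (p :: qs1), qs2, qs3, p', S1, S2; split=> //.
by exists alpha, op.
Qed.

Lemma safa_run_loop q S w qs q' S' :
  safa_run q S w qs q' S' -> #|sQ M| <= size w ->
  exists w1 w2 w3 qs1 qs2 qs3 p S1 S2, [/\ w = w1 ++ w2 ++ w3, w2 != [::],
    safa_run q S w1 qs1 p S1, safa_run p S1 w2 qs2 p S2 &
    safa_run p S2 w3 qs3 q' S'].
Proof.
move=> run Q_w; apply: (safa_run_repeat run); apply/negP => /card_uniqP card_qs.
by have := max_card (mem (q :: qs)); rewrite card_qs /= (safa_run_size run) ltnNge Q_w.
Qed.

Lemma safa_run_frame q S w qs q' S' :
  safa_run q S w qs q' S' -> forall j e, e \notin data w -> S' j e = S j e.
Proof.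
elim: w q S qs => [|[a d] w IH] q S [|p qs] //=; first by case=> _ ->.
case=> alpha [op [_ _ /IH frame]] j e; rewrite inE negb_or => /andP [e_d e_w].
by rewrite frame // /safa_upd eq_sym (negbTE e_d); case: ifP.
Qed.

Lemma safa_acc_local (q : sQ M) (S T : sets) (w : dword Sigma) :
  safa_acc q S w -> (forall j, {in data w, S j =1 T j}) -> safa_acc q T w.
Proof.
elim: w q S T => [|[a d] w IH] q S T //= [alpha [op [q' [dq Sd acc]]]] ST.
exists alpha, op, q'; split=> //; first by rewrite -ST // inE eqxx.
by apply: (IH _ _ _ acc) => j e e_w; rewrite /safa_upd ST // inE e_w orbT.
Qed.

Lemma safa_run_rename sigma q S T w qs q' S' :
  injective sigma -> safa_run q S w qs q' S' ->
  (forall j, {in data w, forall e, T j (sigma e) = S j e}) ->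
  exists T', safa_run q T (rename sigma w) qs q' T'.
Proof.
move=> inj_sigma; elim: w q S T qs => [|[a d] w IH] q S T [|p qs] //=.
  by case=> -> _ _; exists T.
case=> alpha [op [dq Sd run]] TS.
have [|T' run'] := IH _ _ (safa_upd op T (sigma d)) _ run.
  by move=> j e e_w; rewrite /safa_upd (inj_eq inj_sigma) !TS // inE e_w orbT.
by exists T', alpha, op; rewrite TS ?inE ?eqxx.
Qed.

Lemma safa_acc_loop_rename sigma p S w v qs S' :
  injective sigma -> safa_run p S w qs p S' ->
  (forall j, {in data w, forall e, S j (sigma e) = S j e}) ->
  {in data (w ++ v), forall e, e \notin map sigma (data w)} ->
  safa_acc p S (w ++ v) -> safa_acc p S (rename sigma w ++ w ++ v).
Proof.
move=> inj_sigma loop S_sigma fresh acc.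
have [T run_renamed] := safa_run_rename inj_sigma loop S_sigma.
apply/safa_acc_catP; exists qs, p, T; split=> //.
apply: (safa_acc_local acc) => j e /fresh e_fresh.
by rewrite (safa_run_frame run_renamed) ?data_rename.
Qed.

Lemma safa_lang_pump (n : nat) (x v : dword Sigma) :
  uniq (data x) -> #|sQ M| <= size x -> {in data (x ++ v), forall e, e < n} ->
  safa_lang M (x ++ v) ->
  exists w1 w2 w3, [/\ x = w1 ++ w2 ++ w3, w2 != [::] &
    safa_lang M (w1 ++ rename (addn^~ n) w2 ++ w2 ++ w3 ++ v)].
Proof.
move=> uniq_x Q_x small /safa_acc_catP [qs [q [S [run_x acc_v]]]].
have [w1 [w2 [w3 [qs1 [qs2 [qs3 [p [S1 [S2 [x_eq w2_nil run1 loop run3]]]]]]]]]] :=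
  safa_run_loop run_x Q_x.
exists w1, w2, w3; split=> //; apply/safa_acc_catP; exists qs1, p, S1; split=> //.
have small_w1 i : i \in data w1 -> i < n.
  by move=> i_w; apply: small; rewrite x_eq -!catA map_cat mem_cat i_w.
have small_rest i : i \in data (w2 ++ w3 ++ v) -> i < n.
  by move=> i_w; apply: small; rewrite x_eq -!catA map_cat mem_cat i_w orbT.
have S1_empty j e : e \notin data w1 -> S1 j e = false.
  exact: (safa_run_frame run1).
apply: (safa_acc_loop_rename (@addIn n) loop).
- move=> j e e_w2; rewrite !S1_empty //.
    move: uniq_x; rewrite x_eq !map_cat cat_uniq => /and3P [_ /hasPn w1_disj _].
    by apply: w1_disj; rewrite mem_cat e_w2.
  by apply/negP => /small_w1; rewrite ltnNge leq_addl.
- move=> e /small_rest e_n; apply/mapP => [[i _ e_eq]].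
  by move: e_n; rewrite e_eq ltnNge leq_addl.
- apply/safa_acc_catP; exists qs2, p, S2; split=> //.
  by apply/safa_acc_catP; exists qs3, q, S.
Qed.

End SafaRuns.

Lemma safa_not_twice (Sigma : finType) (a0 : Sigma) (M : SAFA Sigma) :
  ~ (forall w : dword Sigma,
       safa_lang M w <-> {in data w, forall d, 1 < count_mem d (data w)}).
Proof.
move=> LM; pose n := #|sQ M|; pose x := [seq (a0, i) | i <- iota 0 n].
have data_x : data x = iota 0 n by rewrite -map_comp map_id.
have small : {in data (x ++ x), forall e, e < n}.
  by move=> e; rewrite map_cat mem_cat orbb data_x mem_iota.
have acc_xx : safa_lang M (x ++ x).
  apply/LM => e; rewrite map_cat count_cat mem_cat orbb data_x => e_x.
  by rewrite count_uniq_mem ?iota_uniq // e_x.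
have [||w1 [w2 [w3 [x_eq w2_nil /LM twice]]]] := safa_lang_pump _ _ small acc_xx.
- by rewrite data_x iota_uniq.
- by rewrite size_map size_iota.
have [small_w1 small_rest] :
    {in data w1, forall e, e < n} /\ {in data (w2 ++ w3 ++ x), forall e, e < n}.
  by split=> e e_w; apply: small; rewrite {1}x_eq -!catA map_cat mem_cat e_w ?orbT.
have not_shifted d s : {in s, forall e, e < n} -> count_mem (d + n) s = 0.
  by move=> s_n; apply/count_memPn/negP => /s_n; rewrite ltnNge leq_addl.
have uniq_w2 : uniq (data w2).
  move: (iota_uniq 0 n); rewrite -data_x x_eq !map_cat !cat_uniq.
  by case/and3P=> _ _ /and3P [].
have [d d_w2] : exists d, d \in data w2.
  case: w2 {x_eq small_rest uniq_w2 twice} w2_nil => // -[a d] w _.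
  by exists d; rewrite inE eqxx.
move: (twice (d + n)); rewrite map_cat [data (rename _ _ ++ _)]map_cat data_rename.
rewrite !count_cat !mem_cat (not_shifted _ _ small_w1) (not_shifted _ _ small_rest).
rewrite count_uniq_mem ?(map_f (addn^~ n) d_w2) ?orbT; first by move/(_ isT).
by rewrite map_inj_uniq // => ? ?; apply: addIn.
Qed.

Theorem corollary2 (Sigma : finType) :
  (forall M : SAFA Sigma, exists N : CMA Sigma,
      forall w : dword Sigma, safa_lang M w <-> cma_lang N w) /\
  (forall a0 : Sigma, exists N : CMA Sigma,
      forall M : SAFA Sigma, ~ (forall w : dword Sigma, safa_lang M w <-> cma_lang N w)).
Proof.
split=> [M|a0]; first by exists (cma_of_safa M); apply: cma_of_safaP.
exists (cma_twice Sigma) => M LM; apply: (safa_not_twice a0 (M := M)) => w.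
exact: iff_trans (LM w) (cma_twiceP w).
Qed.
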